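(* Let $m,n\in\mathbb{Z}$ with $\gcd(m,n)=1$, $mn(m+n)\neq0$, $c=-\frac{A(m,n)}{B(m,n)}$, and let $\{x_1,x_2,x_3\}$ be the rational $3$-cycle of $f_c(x)=x^2+c$ (its elements written in lowest terms). (a) The numerators of $x_1,x_2,x_3$ are pairwise relatively prime. (b) If a prime $p$ divides the numerator of some $x_i$, then $c$ is $p$-integral and $c^3+2c^2+c+1\equiv 0\pmod p$. (c) At most one of the numerators of $x_1,x_2,x_3$ equals $\pm1$.
   Context: $A(m,n)=m^6+2m^5n+4m^4n^2+8m^3n^3+9m^2n^4+4mn^5+n^6$, $B(m,n)=4m^2n^2(m+n)^2$. Standing fact: $f_c$ has a rational $3$-cycle (orbit of a rational point of minimal period $3$) iff $c=-A(m,n)/B(m,n)$ for coprime $m,n$ with $mn(m+n)\ne0$; it then has exactly one, namely $x_1=\frac{t_1}{2mn(m+n)}$, $x_2=\frac{t_2}{2mn(m+n)}$, $x_3=-\frac{t_3}{2mn(m+n)}$ with $t_1=m^3+2m^2n+mn^2+n^3$, $t_2=m^3-mn^2-n^3$, $t_3=m^3+2m^2n+3mn^2+n^3$, and these fractions are in lowest terms. *)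

From mathcomp Require Import all_boot all_order all_algebra.
Set Implicit Arguments. Unset Strict Implicit. Unset Printing Implicit Defensive.
Import Order.TTheory GRing.Theory Num.Theory.
Local Open Scope ring_scope.

Definition fc (c : rat) (x : rat) : rat := x ^+ 2 + c.

Definition min_period3 (c x : rat) : Prop :=
  iter 3 (fc c) x = x /\ (forall k : nat, (0 < k < 3)%N -> iter k (fc c) x != x).

Definition polyA (m n : int) : int :=
  m ^+ 6 + 2 * m ^+ 5 * n + 4 * m ^+ 4 * n ^+ 2 + 8 * m ^+ 3 * n ^+ 3
  + 9 * m ^+ 2 * n ^+ 4 + 4 * m * n ^+ 5 + n ^+ 6.

Definition polyB (m n : int) : int := 4 * m ^+ 2 * n ^+ 2 * (m + n) ^+ 2.

From mathcomp Require Import all_boot all_order all_algebra.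
From mathcomp Require Import zify ring.
Import Order.TTheory GRing.Theory Num.Theory.
Set Implicit Arguments. Unset Strict Implicit.
Local Open Scope ring_scope.

(* 1. The p-adic valuation vp p on Q, its multiplicativity and the
      ultrametric inequality; the predicates "x is p-integral" (pint) and
      "p divides x" (pdvd), their ring-theoretic closure properties, and
      their translation into divisibility of denq x and numq x.
   2. Valuations along a cycle: a point with 2 vp(y) < vp(c) and vp(y) < 0
      would have vp(y1) = 8 vp(y1) < 0.  Hence if c is p-integral so is
      every point of the cycle, and otherwise 2 vp(y) = vp(c) for every
      nonzero point y.
   3. The product identity (y1 + y2)(y2 + y3)(y3 + y1) = 1.
   4. If p divides y1 then c is p-integral and, modulo p, y2 = c,
      y3 = c(c + 1) and 0 = y1 = c * (c^3 + 2c^2 + c + 1); c is a unit by 3,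
      so the cubic vanishes mod p and y2, y3 are units. *)

(* The p-adic valuation of a rational number (with vp p 0 = 0). *)
Definition vp (p : nat) (x : rat) : int :=
  (logn p `|numq x|)%:Z - (logn p `|denq x|)%:Z.

Definition pint (p : nat) (x : rat) : bool := 0 <= vp p x.

Definition pdvd (p : nat) (x : rat) : bool := (x == 0) || (0 < vp p x).

Section Valuation.

Variable p : nat.

Lemma vp0 : vp p 0 = 0.
Proof. by rewrite /vp /= logn0 logn1. Qed.

Lemma vp1 : vp p 1 = 0.
Proof. by rewrite /vp /= logn1. Qed.

Lemma vpN (x : rat) : vp p (- x) = vp p x.
Proof. by rewrite /vp numqN denqN abszN. Qed.

Lemma vp_frac (n d : int) : n != 0 -> d != 0 ->
  vp p (n%:~R / d%:~R) = (logn p `|n|)%:Z - (logn p `|d|)%:Z.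
Proof.
move=> n0 d0; set x : rat := _ / _.
have cross : numq x * d = n * denq x.
  apply: (@intr_inj rat); rewrite !rmorphM /= numqE /x.
  by field; rewrite intr_eq0.
have x0 : x != 0 by rewrite /x mulf_neq0 ?invr_eq0 ?intr_eq0.
have nx0 : numq x != 0 by rewrite numq_eq0.
move: (congr1 (fun z : int => logn p `|z|%N) cross) => /=.
rewrite !abszM !lognM ?absz_gt0 ?denq_neq0 // /vp; lia.
Qed.

Lemma ratM_frac (x y : rat) :
  x * y = (numq x * numq y)%:~R / (denq x * denq y)%:~R.
Proof.
rewrite !rmorphM /= -{1}(divq_num_den x) -{1}(divq_num_den y).
by field; rewrite !intr_eq0 !denq_neq0.
Qed.

Lemma ratD_frac (x y : rat) :
  x + y = (numq x * denq y + numq y * denq x)%:~R / (denq x * denq y)%:~R.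
Proof.
rewrite rmorphD !rmorphM /= -{1}(divq_num_den x) -{1}(divq_num_den y).
by field; rewrite !intr_eq0 !denq_neq0.
Qed.

Lemma vpM (x y : rat) : x != 0 -> y != 0 -> vp p (x * y) = vp p x + vp p y.
Proof.
move=> x0 y0; rewrite ratM_frac vp_frac ?mulf_neq0 ?numq_eq0 ?denq_neq0 //.
rewrite /vp !abszM !lognM ?absz_gt0 ?numq_eq0 ?denq_neq0 //; lia.
Qed.

Lemma vpX2 (x : rat) : x != 0 -> vp p (x ^+ 2) = 2 * vp p x.
Proof. by move=> x0; rewrite expr2 vpM //; lia. Qed.

(* Closure properties of p-integral rationals and of their ideal pdvd p;
   only additivity needs p to be prime. *)
Lemma pint1 : pint p 1.
Proof. by rewrite /pint vp1. Qed.

Lemma pdvd1 : ~~ pdvd p 1.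
Proof. by rewrite /pdvd vp1 oner_eq0. Qed.

Lemma pdvd_pint (x : rat) : pdvd p x -> pint p x.
Proof. by rewrite /pdvd /pint => /orP[/eqP ->|/ltW //]; rewrite vp0. Qed.

Lemma pintM (x y : rat) : pint p x -> pint p y -> pint p (x * y).
Proof.
rewrite /pint => hx hy.
have [-> | x0] := eqVneq x 0; first by rewrite mul0r vp0.
have [-> | y0] := eqVneq y 0; first by rewrite mulr0 vp0.
by rewrite vpM //; lia.
Qed.

Lemma pdvdN (x : rat) : pdvd p x -> pdvd p (- x).
Proof. by rewrite /pdvd oppr_eq0 vpN. Qed.

Lemma pdvdM (x y : rat) : pdvd p x -> pint p y -> pdvd p (x * y).
Proof.
rewrite /pdvd /pint => /orP[/eqP -> | hx] hy; first by rewrite mul0r eqxx.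
have [-> | y0] := eqVneq y 0; first by rewrite mulr0 eqxx.
have x0 : x != 0 by apply: contraTneq hx => ->; rewrite vp0.
by rewrite vpM // orbC; apply/orP; left; lia.
Qed.

Lemma pdvd_prime (x y : rat) : pint p x -> pint p y -> pdvd p (x * y) ->
  pdvd p x || pdvd p y.
Proof.
rewrite /pdvd /pint => hx hy.
have [_ // | x0] := eqVneq x 0.
have [_ | y0] := eqVneq y 0; first by rewrite orbT.
by rewrite mulf_eq0 (negPf x0) (negPf y0) /= vpM //; lia.
Qed.

Hypothesis p_prime : prime p.

Lemma vpD_ge (x y : rat) (k : int) : x != 0 -> y != 0 -> x + y != 0 ->
  k <= vp p x -> k <= vp p y -> k <= vp p (x + y).
Proof.
move=> x0 y0 xy0; rewrite ratD_frac; set s := _ + _ => kx ky.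
have s0 : s != 0 by apply: contra xy0 => /eqP s0; rewrite ratD_frac -/s s0 mul0r.
rewrite vp_frac ?mulf_neq0 ?denq_neq0 // abszM lognM ?absz_gt0 ?denq_neq0 //.
set ex := logn p `|denq x|; set ey := logn p `|denq y|.
have [|k_pos] := lerP (k + ex%:Z + ey%:Z) 0; first lia.
(* p ^ K divides both terms of the numerator, hence their sum. *)
pose K := absz (k + ex%:Z + ey%:Z).
have dvdK (a b : int) : a != 0 -> b != 0 -> (K <= logn p `|a| + logn p `|b|)%N ->
    (Posz (p ^ K) %| a * b)%Z.
  move=> a0 b0 le; rewrite dvdzE abszM pfactor_dvdn ?muln_gt0 ?absz_gt0 ?a0 ?b0 //.
  by rewrite lognM ?absz_gt0.
have nx0 : numq x != 0 by rewrite numq_eq0.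
have ny0 : numq y != 0 by rewrite numq_eq0.
have : (Posz (p ^ K) %| s)%Z.
  by apply: rpredD; apply: dvdK; rewrite ?denq_neq0 // /K; move: kx ky; rewrite /vp; lia.
by rewrite dvdzE pfactor_dvdn ?absz_gt0 // /K; lia.
Qed.

Lemma vpD_lt (x y : rat) : x != 0 -> y != 0 -> vp p x < vp p y ->
  x + y != 0 /\ vp p (x + y) = vp p x.
Proof.
move=> x0 y0 lt.
have xy0 : x + y != 0.
  by apply: contraTneq lt => /eqP; rewrite addr_eq0 => /eqP ->; rewrite vpN ltxx.
split=> //; have Ny0 : - y != 0 by rewrite oppr_eq0.
have ge : vp p x <= vp p (x + y) by apply: vpD_ge => //; lia.
have : Order.min (vp p (x + y)) (vp p y) <= vp p (x + y - y).
  by apply: vpD_ge; rewrite ?addrK ?vpN // ?ge_min ?lexx ?orbT.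
by rewrite addrK ge_min => /orP[] ?; lia.
Qed.

Lemma pintD (x y : rat) : pint p x -> pint p y -> pint p (x + y).
Proof.
rewrite /pint => hx hy.
have [-> | x0] := eqVneq x 0; first by rewrite add0r.
have [-> | y0] := eqVneq y 0; first by rewrite addr0.
have [-> | xy0] := eqVneq (x + y) 0; first by rewrite vp0.
exact: vpD_ge.
Qed.

Lemma pdvdD (x y : rat) : pdvd p x -> pdvd p y -> pdvd p (x + y).
Proof.
rewrite /pdvd => /orP[/eqP -> | hx]; first by rewrite add0r.
move=> /orP[/eqP -> | hy]; first by rewrite addr0 hx orbT.
have [_ // | xy0] := eqVneq (x + y) 0.
have x0 : x != 0 by apply: contraTneq hx => ->; rewrite vp0.
have y0 : y != 0 by apply: contraTneq hy => ->; rewrite vp0.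
by have := @vpD_ge x y 1 x0 y0 xy0; lia.
Qed.

(* vp x > 0 iff p divides numq x, and vp x >= 0 iff p does not divide
   denq x (numerator and denominator are coprime). *)
Lemma vp_sign (x : rat) : x != 0 ->
  [/\ (0 < vp p x) = (p %| `|numq x|)%N & (0 <= vp p x) = ~~ (p %| `|denq x|)%N].
Proof.
move=> x0; have n0 : (0 < `|numq x|)%N by rewrite absz_gt0 numq_eq0.
have d0 : (0 < `|denq x|)%N by rewrite absz_gt0 denq_neq0.
have hn := logn_gt0 p `|numq x|; rewrite mem_primes p_prime n0 /= in hn.
have hd := logn_gt0 p `|denq x|; rewrite mem_primes p_prime d0 /= in hd.
have not_both : ~~ ((p %| `|numq x|) && (p %| `|denq x|))%N.
  by rewrite -dvdn_gcd (eqP (coprime_num_den x)) dvdn1 gtn_eqF ?prime_gt1.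
rewrite /vp; move: hn hd not_both.
by case: (p %| _)%N; case: (p %| _)%N => /= hn hd not_both; split; lia.
Qed.

Lemma pdvdE (x : rat) : pdvd p x = (p%:Z %| numq x)%Z.
Proof.
rewrite /pdvd; have [-> | x0] := eqVneq x 0; first by rewrite dvdz0.
by have [-> _] := vp_sign x0; rewrite dvdzE /=.
Qed.

Lemma pintE (x : rat) : pint p x = ~~ (p%:Z %| denq x)%Z.
Proof.
have [-> | x0] := eqVneq x 0.
  by rewrite /pint vp0 /= dvdzE /= dvdn1 gtn_eqF ?prime_gt1.
by rewrite /pint; have [_ ->] := vp_sign x0; rewrite dvdzE.
Qed.

End Valuation.

Lemma coprime_by_primes (a b : nat) :
  (forall q, prime q -> (q %| a)%N -> (q %| b)%N -> False) -> coprime a b.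
Proof.
move=> no_common; rewrite /coprime.
have [g0 | g1 | //] := ltngtP (gcdn a b) 1.
- have g_0 : gcdn a b = 0%N by move: g0; case: (gcdn a b).
  exfalso; apply: (no_common 2%N) => //.
    by move: (dvdn_gcdl a b); rewrite g_0 dvd0n => /eqP ->.
  by move: (dvdn_gcdr a b); rewrite g_0 dvd0n => /eqP ->.
- exfalso; have [q q_prime q_dvd] := pdivP g1.
  apply: (no_common q q_prime).
    exact: dvdn_trans q_dvd (dvdn_gcdl _ _).
  exact: dvdn_trans q_dvd (dvdn_gcdr _ _).
Qed.

Definition cycle3 (c y1 y2 y3 : rat) : Prop :=
  [/\ y2 = y1 ^+ 2 + c, y3 = y2 ^+ 2 + c, y1 = y3 ^+ 2 + c &
      [&& y1 != y2, y2 != y3 & y3 != y1]].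

Definition cubic (c : rat) : rat := c ^+ 3 + 2 * c ^+ 2 + c + 1.

(* Cycles are invariant under rotation, so statements about y1 apply to
   every point. *)
Lemma cycle3_rot (c y1 y2 y3 : rat) : cycle3 c y1 y2 y3 -> cycle3 c y2 y3 y1.
Proof. by case=> e1 e2 e3 /and3P[d1 d2 d3]; split => //; apply/and3P. Qed.

Lemma min_period3_cycle3 (c x : rat) :
  min_period3 c x -> cycle3 c x (fc c x) (fc c (fc c x)).
Proof.
case=> period3 minimal.
have d12 : x != fc c x by rewrite eq_sym; exact: (minimal 1%N).
have d31 : fc c (fc c x) != x by exact: (minimal 2%N).
have d23 : fc c x != fc c (fc c x).
  apply: contraNneq d31 => e; apply/eqP; rewrite -[in RHS]period3 /=.
  by congr (fc c _).
by split; [| | rewrite -[LHS]period3 | apply/and3P].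
Qed.

(* Differences of consecutive points multiply around the cycle, which
   forces (y1 + y2)(y2 + y3)(y3 + y1) = 1. *)
Lemma cycle3_prod (c y1 y2 y3 : rat) : cycle3 c y1 y2 y3 ->
  (y1 + y2) * (y2 + y3) * (y3 + y1) = 1.
Proof.
case=> e1 e2 e3 /and3P[d12 _ _].
have a1 : y3 - y2 = (y2 - y1) * (y1 + y2) by rewrite e2 {2}e1; ring.
have a2 : y1 - y3 = (y3 - y2) * (y2 + y3) by rewrite e3 {2}e2; ring.
have a3 : y2 - y1 = (y1 - y3) * (y3 + y1) by rewrite e1 {2}e3; ring.
have nz : y2 - y1 != 0 by rewrite subr_eq0 eq_sym.
by apply: (mulfI nz); rewrite mulr1 {2}a3 a2 a1; ring.
Qed.

Section CycleValuations.

Variables (p : nat) (c : rat).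
Hypothesis p_prime : prime p.

Lemma escape_step (y : rat) : y != 0 -> vp p y < 0 -> 2 * vp p y < vp p c ->
  y ^+ 2 + c != 0 /\ vp p (y ^+ 2 + c) = 2 * vp p y.
Proof.
move=> y0 neg dom; have y20 : y ^+ 2 != 0 by rewrite expf_neq0.
have [-> | c0] := eqVneq c 0; first by rewrite addr0 vpX2.
by rewrite -(vpX2 p y0); apply: vpD_lt; rewrite ?vpX2.
Qed.

(* Such a point cannot lie on a 3-cycle: its valuation would be
   multiplied by 8 after one turn. *)
Lemma no_escape (y1 y2 y3 : rat) : cycle3 c y1 y2 y3 -> y1 != 0 ->
  vp p y1 < 0 -> 2 * vp p y1 < vp p c -> False.
Proof.
move=> [e1 e2 e3 _] y10 neg1 dom1.
have [y20 v2] := escape_step y10 neg1 dom1; rewrite -e1 in y20 v2.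
have [y30 v3] := escape_step y20 (ltac:(lia)) (ltac:(lia)); rewrite -e2 in y30 v3.
have [_ v1] := escape_step y30 (ltac:(lia)) (ltac:(lia)); rewrite -e3 in v1.
lia.
Qed.

Lemma cycle3_pint (y1 y2 y3 : rat) : cycle3 c y1 y2 y3 -> pint p c -> pint p y1.
Proof.
rewrite /pint => cyc c_int; have [// | neg] := leP 0 (vp p y1).
have y10 : y1 != 0 by apply: contraTneq neg => ->; rewrite vp0.
exfalso; apply: (no_escape cyc y10 neg); lia.
Qed.

Lemma cycle3_half (y1 y2 y3 : rat) : cycle3 c y1 y2 y3 -> vp p c < 0 ->
  y1 != 0 -> 2 * vp p y1 = vp p c.
Proof.
move=> cyc c_neg y10.
have c0 : c != 0 by apply: contraTneq c_neg => ->; rewrite vp0.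
case: (ltgtP (2 * vp p y1) (vp p c)) => // [lt | gt].
  by exfalso; apply: (no_escape cyc y10); lia.
(* Otherwise c dominates y1^2, so y2 = y1^2 + c escapes. *)
have y20 : y1 ^+ 2 != 0 by rewrite expf_neq0.
have [y2_0 v2] := vpD_lt p_prime c0 y20 (ltac:(rewrite vpX2 //; lia)).
have [e1 _ _ _] := cyc; rewrite addrC -e1 in y2_0 v2.
by exfalso; apply: (no_escape (cycle3_rot cyc) y2_0); lia.
Qed.

End CycleValuations.

Section CycleModP.

Variables (p : nat) (c y1 y2 y3 : rat).
Hypotheses (p_prime : prime p) (cyc : cycle3 c y1 y2 y3) (p_y1 : pdvd p y1).

Lemma cycle3_pint_c : pint p c.
Proof.
rewrite /pint; have [// | c_neg] := leP 0 (vp p c); exfalso.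
have [e1 _ _ _] := cyc.
have [y10 | y10] := eqVneq y1 0.
  (* then y2 = c, whose valuation is not even half of itself *)
  have y2c : y2 = c by rewrite e1 y10 expr0n add0r.
  have y20 : y2 != 0 by rewrite y2c; apply: contraTneq c_neg => ->; rewrite vp0.
  by have := cycle3_half p_prime (cycle3_rot cyc) c_neg y20; rewrite y2c; lia.
have := cycle3_half p_prime cyc c_neg y10.
by move: p_y1; rewrite /pdvd (negPf y10) /=; lia.
Qed.

Lemma cycle3_congr :
  [/\ pdvd p (y2 - c), pdvd p (y3 - c * (c + 1)) & pdvd p (c * cubic c)].
Proof.
have [e1 e2 e3 _] := cyc; have c_int := cycle3_pint_c.
have y2_int : pint p y2 := cycle3_pint p_prime (cycle3_rot cyc) c_int.
have y3_int : pint p y3 := cycle3_pint p_prime (cycle3_rot (cycle3_rot cyc)) c_int.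
have cc1_int : pint p (c * (c + 1)) by rewrite pintM ?pintD ?pint1.
have p_y2 : pdvd p (y2 - c).
  by rewrite e1 addrK expr2 pdvdM ?pdvd_pint.
have p_y3 : pdvd p (y3 - c * (c + 1)).
  have -> : y3 - c * (c + 1) = (y2 - c) * (y2 + c) by rewrite e2; ring.
  by rewrite pdvdM ?pintD.
split=> //.
have -> : c * cubic c = y1 - (y3 - c * (c + 1)) * (y3 + c * (c + 1)).
  by rewrite /cubic e3; ring.
by rewrite pdvdD ?pdvdN ?pdvdM ?pintD.
Qed.

(* c is a p-adic unit: otherwise all points vanish mod p, contradicting
   the product identity. *)
Lemma cycle3_c_unit : ~~ pdvd p c.
Proof.
apply/negP => p_c; have [p_y2 p_y3 _] := cycle3_congr.
have c_int := pdvd_pint p_c.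
have p_y2' : pdvd p y2 by rewrite -(subrK c y2) pdvdD.
have p_y3' : pdvd p y3.
  by rewrite -(subrK (c * (c + 1)) y3) pdvdD ?pdvdM ?pintD ?pint1.
move/negP: (pdvd1 p); apply; rewrite -(cycle3_prod cyc).
apply: pdvdM; last by rewrite pintD ?pdvd_pint.
apply: pdvdM; last by rewrite pintD ?pdvd_pint.
exact: pdvdD.
Qed.

Lemma cycle3_mod_p :
  [/\ pint p c, pdvd p (cubic c), ~~ pdvd p y2 & ~~ pdvd p y3].
Proof.
have c_int := cycle3_pint_c; have c_unit := cycle3_c_unit.
have [p_y2 p_y3 p_ccubic] := cycle3_congr.
have c1_int : pint p (c + 1) by rewrite pintD ?pint1.
have cubic_int : pint p (cubic c).
  have -> : cubic c = c * ((c + 1) * (c + 1)) + 1 by rewrite /cubic; ring.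
  by rewrite pintD ?pintM ?pint1.
have p_cubic : pdvd p (cubic c).
  by have := pdvd_prime c_int cubic_int p_ccubic; rewrite (negPf c_unit).
split=> //.
  by apply: contra c_unit => p_y2'; rewrite -(subKr y2 c) pdvdD ?pdvdN.
apply/negP => p_y3'.
have p_cc1 : pdvd p (c * (c + 1)) by rewrite -(subKr y3 (c * _)) pdvdD ?pdvdN.
have := pdvd_prime c_int c1_int p_cc1; rewrite (negPf c_unit) /= => p_c1.
(* c = -1 mod p makes cubic c = 1 mod p *)
move/negP: (pdvd1 p); apply.
have -> : 1 = cubic c - c * (c + 1) * (c + 1) by rewrite /cubic; ring.
by apply: pdvdD (pdvdN (pdvdM p_cc1 (pdvd_pint p_c1))).
Qed.

End CycleModP.

Lemma cycle3_num_prime (p : nat) (c y1 y2 y3 : rat) : prime p ->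
  cycle3 c y1 y2 y3 -> (p%:Z %| numq y1)%Z ->
  ~~ (p%:Z %| denq c)%Z /\ (p%:Z %| numq (cubic c))%Z.
Proof.
move=> p_prime cyc p_y1; rewrite -pintE // -pdvdE //.
by have [] := cycle3_mod_p p_prime cyc (ltac:(by rewrite pdvdE)).
Qed.

Lemma cycle3_coprime (c y1 y2 y3 : rat) : cycle3 c y1 y2 y3 ->
  coprimez (numq y1) (numq y2) /\ coprimez (numq y1) (numq y3).
Proof.
move=> cyc; split; rewrite coprimezE; apply: coprime_by_primes => q q_prime q1 q2;
  have [_ _ q_y2 q_y3] := cycle3_mod_p q_prime cyc (ltac:(by rewrite pdvdE // dvdzE)).
- by move: q_y2; rewrite pdvdE // dvdzE q2.
- by move: q_y3; rewrite pdvdE // dvdzE q2.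
Qed.

(* Two points with numerators +-1 have the same denominator: at every prime
   both valuations are determined by c (step 2). *)
Lemma cycle3_unit_den (c y1 y2 y3 : rat) : cycle3 c y1 y2 y3 ->
  `|numq y1|%N = 1%N -> `|numq y2|%N = 1%N -> denq y1 = denq y2.
Proof.
move=> cyc n1 n2; have cyc2 := cycle3_rot cyc.
have y10 : y1 != 0 by rewrite -numq_eq0 -absz_eq0 n1.
have y20 : y2 != 0 by rewrite -numq_eq0 -absz_eq0 n2.
have same_vp q : prime q -> vp q y1 = vp q y2.
  move=> q_prime; have [c_int | c_neg] := leP 0 (vp q c).
    have := cycle3_pint q_prime cyc c_int; have := cycle3_pint q_prime cyc2 c_int.
    by rewrite /pint /vp n1 n2 logn1; lia.
  have := cycle3_half q_prime cyc c_neg y10.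
  by have := cycle3_half q_prime cyc2 c_neg y20; lia.
rewrite -[denq y1]absz_denq -[denq y2]absz_denq; congr Posz.
apply: eqn_from_log; rewrite ?absz_gt0 ?denq_neq0 // => q.
have [q_prime | q_not_prime] := boolP (prime q); last by rewrite /logn !(negPf q_not_prime).
by have := same_vp q q_prime; rewrite /vp n1 n2 logn1; lia.
Qed.

Lemma cycle3_unit_num (c y1 y2 y3 : rat) : cycle3 c y1 y2 y3 ->
  ~~ ((`|numq y1| == 1) && (`|numq y2| == 1))%N.
Proof.
move=> cyc; apply/andP => -[/eqP n1 /eqP n2].
have same_den := cycle3_unit_den cyc n1 n2.
have [_ _ _ /and3P[d12 _ _]] := cyc.
have num_opp : numq y1 = - numq y2.
  have : numq y1 != numq y2 by apply: contra d12 => /eqP e; rewrite rat_eqE e same_den !eqxx.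
  by move: n1 n2; lia.
have y12 : y1 + y2 = 0.
  by rewrite -(divq_num_den y1) -(divq_num_den y2) num_opp same_den rmorphN mulNr addNr.
by have := cycle3_prod cyc; rewrite y12 !mul0r => /eqP; rewrite eq_sym oner_eq0.
Qed.

Theorem theorem6 (m n : int) (c : rat) (x : rat) :
  coprimez m n -> m * n * (m + n) != 0 ->
  c = - ((polyA m n)%:~R / (polyB m n)%:~R) ->
  min_period3 c x ->
  let x1 := x in let x2 := fc c x1 in let x3 := fc c x2 in
  [/\ (* (a) *)
      [&& coprimez (numq x1) (numq x2), coprimez (numq x1) (numq x3)
        & coprimez (numq x2) (numq x3)],
      (* (b) *)
      (forall p : nat, prime p ->
         [|| (p%:Z %| numq x1)%Z, (p%:Z %| numq x2)%Z | (p%:Z %| numq x3)%Z] ->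
         ~~ (p%:Z %| denq c)%Z /\
         (p%:Z %| numq (c ^+ 3 + 2 * c ^+ 2 + c + 1))%Z) &
      (* (c) *)
      (count (fun y : rat => `|numq y| == 1) [:: x1; x2; x3] <= 1)%N].
Proof.
move=> _ _ _ period3 x1 x2 x3.
have cyc1 : cycle3 c x1 x2 x3 := min_period3_cycle3 period3.
have cyc2 := cycle3_rot cyc1; have cyc3 := cycle3_rot cyc2.
have [a12 a13] := cycle3_coprime cyc1; have [a23 _] := cycle3_coprime cyc2.
split; first by rewrite a12 a13 a23.
  move=> p p_prime /or3P[] p_dvd; [exact: cycle3_num_prime p_prime cyc1 p_dvd |
    exact: cycle3_num_prime p_prime cyc2 p_dvd |
    exact: cycle3_num_prime p_prime cyc3 p_dvd].
have := cycle3_unit_num cyc1; have := cycle3_unit_num cyc2.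
have := cycle3_unit_num cyc3.
by rewrite /=; do 3!case: (_ == 1).
Qed.
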